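(* Let $\Bbbk$ be a commutative ring. The coinduction functor $Q:\mathrm{FI}\text{-}\mathrm{Mod}\to\mathrm{FI}\text{-}\mathrm{Mod}$ is isomorphic to the functor $Q':V\mapsto Q'V$.
   Context: $\mathrm{FI}$ is the category whose objects are finite sets and whose morphisms are injective maps. An $\mathrm{FI}$-module is a functor from $\mathrm{FI}$ to the category of $\Bbbk$-modules; homomorphisms are natural transformations; $\mathrm{FI}\text{-}\mathrm{Mod}$ denotes this category. For an $\mathrm{FI}$-module $V$ and a finite set $X$ write $V_X=V(X)$, and for an injection $f$ write $f_*=V(f)$. For a finite set $X$, $M(X)$ is the $\mathrm{FI}$-module with $M(X)_Y=\Bbbk\,\mathrm{FI}(X,Y)$ (free $\Bbbk$-module on injections $X\to Y$), with structure maps given by postcomposition; for $f\in\mathrm{FI}(X,Y)$ let $\rho_f:M(Y)\to M(X)$, $g\mapsto g\circ f$. Fix a one-element set $\{\star\}$; the shift functor is $SV=V\circ\sigma$ where $\sigma(X)=X\sqcup\{\star\}$, $\sigma(f)=f\sqcup\mathrm{id}_{\{\star\}}$. The coinduction functor is $Q=S^\dagger$, defined by $(QV)_X=\mathrm{Hom}_{\mathrm{FI}\text{-}\mathrm{Mod}}(S(M(X)),V)$, with $f_*(\phi)=\phi\circ S(\rho_f)$ for $f\in\mathrm{FI}(X,Y)$, and acting on homomorphisms $V\to W$ by postcomposition. The negative-one shift functor is defined by $(\widetilde{S}_{-1}V)_X=\bigoplus_{x\in X}V_{X\setminus\{x\}}$, and for an injection $f:X\to Y$, $f_*:(\widetilde{S}_{-1}V)_X\to(\widetilde{S}_{-1}V)_Y$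 restricts on the summand $V_{X\setminus\{x\}}$ to $(f|_{X\setminus\{x\}})_*:V_{X\setminus\{x\}}\to V_{Y\setminus\{f(x)\}}$. For an injection $f:X\to Y$ and $y\in Y\setminus f(X)$, let $\partial_yf:X\to Y\setminus\{y\}$ be $f$ with codomain restricted, and define $\partial f_*:V_X\to(\widetilde{S}_{-1}V)_Y$ by $v\mapsto\sum_{y\in Y\setminus f(X)}(\partial_yf)_*(v)$, where $(\partial_yf)_*(v)$ lies in the summand $V_{Y\setminus\{y\}}$. The $\mathrm{FI}$-module $Q'V$ is given by $(Q'V)_X=V_X\oplus(\widetilde{S}_{-1}V)_X$, and for an injection $f:X\to Y$, $f_*:(Q'V)_X\to(Q'V)_Y$ is given in column notation by the matrix $\begin{pmatrix} f_* & 0\\ \partial f_* & f_*\end{pmatrix}$, i.e. $(v,w)\mapsto (f_*v,\ \partial f_*(v)+f_*w)$; $Q'$ acts on homomorphisms componentwise. *)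

From HB Require Import structures.
From mathcomp Require Import all_boot all_algebra.


Unset Printing Implicit Defensive.
Import GRing.Theory.
Local Open Scope ring_scope.

Definition FIhom (X Y : finType) := {f : {ffun X -> Y} | injectiveb f}.

Definition FIfun {X Y : finType} (f : FIhom X Y) : X -> Y := fun x => val f x.
Coercion FIfun : FIhom >-> Funclass.

Lemma FIfun_inj {X Y : finType} (f : FIhom X Y) : injective f.
Proof. by case: f => g gi x y; apply: (injectiveP _ gi). Qed.

Lemma mkFI_proof {X Y : finType} {g : X -> Y} (gi : injective g) :
  injectiveb [ffun x => g x].
Proof. by apply/injectiveP => a b; rewrite !ffunE; apply: gi. Qed.

Definition mkFI {X Y : finType} {g : X -> Y} (gi : injective g) : FIhom X Y :=
  exist _ [ffun x => g x] (mkFI_proof gi).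

Lemma mkFIE {X Y : finType} {g : X -> Y} (gi : injective g) x :
  mkFI gi x = g x.
Proof. by rewrite /FIfun /= ffunE. Qed.

Definition FIid (X : finType) : FIhom X X := mkFI (@inj_id X).

Definition FIcomp {X Y Z : finType} (g : FIhom Y Z) (f : FIhom X Y) : FIhom X Z :=
  mkFI (inj_comp (@FIfun_inj _ _ g) (@FIfun_inj _ _ f)).

Lemma FIcompE {X Y Z : finType} (g : FIhom Y Z) (f : FIhom X Y) x :
  FIcomp g f x = g (f x).
Proof. by rewrite mkFIE. Qed.

Lemma FIhom_ext {X Y : finType} (f g : FIhom X Y) : (forall x, f x = g x) -> f = g.
Proof. by move=> e; apply: val_inj; apply/ffunP => x; exact: e. Qed.

Lemma FIcompA {X Y Z W : finType} (h : FIhom Z W) (g : FIhom Y Z) (f : FIhom X Y) :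
  FIcomp h (FIcomp g f) = FIcomp (FIcomp h g) f.
Proof. by apply: FIhom_ext => x; rewrite !FIcompE. Qed.

(* sigma : X |-> X \sqcup {star}, realised as option X with star = None *)
Lemma omap_inj {X Y : finType} (f : FIhom X Y) : injective (omap f).
Proof.
by case=> [a|] [b|] //= [] e; rewrite (FIfun_inj f _ _ e).
Qed.

Definition FIsigma {X Y : finType} (f : FIhom X Y) : FIhom (option X) (option Y) :=
  mkFI (@omap_inj _ _ f).

Definition Xm {X : finType} (x : X) : finType := {y : X | y != x}.

Lemma resF_proof {X Y : finType} (f : FIhom X Y) (x : X) (y : Y) (e : f x == y)
  (z : Xm x) : f (val z) != y.
Proof. by rewrite -(eqP e) (inj_eq (@FIfun_inj _ _ f)); exact: (valP z). Qed.

Lemma resF_inj {X Y : finType} (f : FIhom X Y) (x : X) (y : Y) (e : f x == y) :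
  injective (fun z : Xm x => (exist _ (f (val z)) (resF_proof f x y e z) : Xm y)).
Proof. by move=> a b [] /(FIfun_inj f) ab; apply: val_inj. Qed.

Definition resF {X Y : finType} (f : FIhom X Y) (x : X) (y : Y) (e : f x == y) :
  FIhom (Xm x) (Xm y) := mkFI (@resF_inj X Y f x y e).

Lemma dpartF_proof {X Y : finType} (f : FIhom X Y) (y : Y)
  (h : y \notin codom f) (x : X) : f x != y.
Proof. by apply: contraNneq h => <-; exact: codom_f. Qed.

Lemma dpartF_inj {X Y : finType} (f : FIhom X Y) (y : Y) (h : y \notin codom f) :
  injective (fun x : X => (exist _ (f x) (dpartF_proof f y h x) : Xm y)).
Proof. by move=> a b [] /(FIfun_inj f). Qed.

Definition dpartF {X Y : finType} (f : FIhom X Y) (y : Y) (h : y \notin codom f) :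
  FIhom X (Xm y) := mkFI (@dpartF_inj X Y f y h).

Section FIModules.
Variable k : comPzRingType.

Record preFImod := PreFImod {
  pobj : finType -> lmodType k;
  pact : forall {X Y : finType}, FIhom X Y -> pobj X -> pobj Y }.
Arguments pact p {X Y} f _.
Arguments pobj p X.

Record FImod := FImodule {
  FIpre :> preFImod;
  FIact_linear : forall {X Y : finType} (f : FIhom X Y) (a : k) (u v : pobj FIpre X),
      pact FIpre f (a *: u + v) = a *: pact FIpre f u + pact FIpre f v;
  FIact_id : forall (X : finType) (v : pobj FIpre X), pact FIpre (FIid X) v = v;
  FIact_comp : forall {X Y Z : finType} (f : FIhom X Y) (g : FIhom Y Z) (v : pobj FIpre X),
      pact FIpre (FIcomp g f) v = pact FIpre g (pact FIpre f v) }.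

Record FImorph (V W : preFImod) := FIMorph {
  mmap :> forall X : finType, pobj V X -> pobj W X;
  mmap_linear : forall (X : finType) (a : k) (u v : pobj V X),
      mmap X (a *: u + v) = a *: mmap X u + mmap X v;
  mmap_nat : forall {X Y : finType} (f : FIhom X Y) (v : pobj V X),
      mmap Y (pact V f v) = pact W f (mmap X v) }.
Arguments FIMorph {V W}.
Arguments mmap {V W} _ X _.

Section Comp.
Variables U V W : preFImod.
Variables (beta : FImorph V W) (alpha : FImorph U V).
Lemma FIcompm_linear (X : finType) (a : k) (u v : pobj U X) :
  beta X (alpha X (a *: u + v)) = a *: beta X (alpha X u) + beta X (alpha X v).
Proof. by rewrite !mmap_linear. Qed.
Lemma FIcompm_nat {X Y : finType} (f : FIhom X Y) (v : pobj U X) :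
  beta Y (alpha Y (pact U f v)) = pact W f (beta X (alpha X v)).
Proof. by rewrite !mmap_nat. Qed.
Definition FIcompm : FImorph U W :=
  @FIMorph U W (fun X v => beta X (alpha X v)) FIcompm_linear (@FIcompm_nat).
End Comp.
Arguments FIcompm {U V W} beta alpha.

Definition Spre (V : preFImod) : preFImod :=
  PreFImod (fun X => pobj V (option X)) (fun X Y f => pact V (FIsigma f)).

Section ShiftMorph.
Variables (V W : preFImod) (alpha : FImorph V W).
Lemma Smorph_linear (X : finType) (a : k) (u v : pobj (Spre V) X) :
  alpha (option X) (a *: u + v) = a *: alpha (option X) u + alpha (option X) v.
Proof. exact: mmap_linear. Qed.
Lemma Smorph_nat {X Y : finType} (f : FIhom X Y) (v : pobj (Spre V) X) :
  alpha (option Y) (pact (Spre V) f v) = pact (Spre W) f (alpha (option X) v).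
Proof. exact: mmap_nat. Qed.
Definition Smorph : FImorph (Spre V) (Spre W) :=
  @FIMorph (Spre V) (Spre W) (fun X => alpha (option X)) Smorph_linear (@Smorph_nat).
End ShiftMorph.
Arguments Smorph {V W} alpha.

(* The free FI-module M(X): M(X)_Y = k FI(X,Y), with postcomposition.       *)
(* An element of M(X)_Y is a finitely supported k-valued function on the    *)
(* finite set FI(X,Y), i.e. the formal combination  sum_g a(g) g.            *)
(* The image of sum_g a(g) g under h_* is sum_g a(g) (h o g).               *)

Definition MXobj (X Y : finType) : lmodType k := {ffun FIhom X Y -> k^o}.

Definition MXact {X Y Z : finType} (h : FIhom Y Z) (a : MXobj X Y) : MXobj X Z :=
  [ffun u : FIhom X Z => \sum_(g : FIhom X Y | FIcomp h g == u) a g].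

Definition MX (X : finType) : preFImod := PreFImod (MXobj X) (@MXact X).

(* rho_f : M(Y) -> M(X),  g |-> g o f,  extended linearly *)
Definition rho_map {X Y : finType} (f : FIhom X Y) (Z : finType) (a : MXobj Y Z) :
  MXobj X Z :=
  [ffun u : FIhom X Z => \sum_(g : FIhom Y Z | FIcomp g f == u) a g].

Lemma rho_linear {X Y : finType} (f : FIhom X Y) (Z : finType) (c : k)
  (a b : pobj (MX Y) Z) :
  rho_map f Z (c *: a + b) = c *: rho_map f Z a + rho_map f Z b.
Proof.
apply/ffunP => u; rewrite !ffunE scaler_sumr -big_split /=.
by apply: eq_bigr => g _; rewrite !ffunE.
Qed.

Lemma sum_comp_helper {I J : finType} (P : J -> bool) (Q : I -> J -> bool)
  (F : I -> k) (m : I -> J) :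
  (forall i j, Q i j = (j == m i)) ->
  \sum_(j | P j) \sum_(i | Q i j) F i = \sum_(i | P (m i)) F i.
Proof.
move=> hQ.
transitivity (\sum_j \sum_i (if P j && Q i j then F i else 0)).
  rewrite big_mkcond; apply: eq_bigr => j _; case: (P j) => /=.
    by rewrite big_mkcond.
  by rewrite big1.
rewrite exchange_big [RHS]big_mkcond; apply: eq_bigr => i _.
rewrite (bigD1 (m i)) //= hQ eqxx andbT big1 ?addr0 //.
by move=> j jm; rewrite hQ (negbTE jm) andbF.
Qed.

Lemma rho_nat {X Y : finType} (f : FIhom X Y) {Z W : finType} (h : FIhom Z W)
  (a : pobj (MX Y) Z) :
  rho_map f W (pact (MX Y) h a) = pact (MX X) h (rho_map f Z a).
Proof.
apply/ffunP => u; rewrite /= /MXact /rho_map !ffunE.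
rewrite (eq_bigr (fun g => \sum_(g0 | FIcomp h g0 == g) a g0)); last first.
  by move=> g _; rewrite ffunE.
rewrite [RHS](eq_bigr (fun t => \sum_(g0 | FIcomp g0 f == t) a g0)); last first.
  by move=> t _; rewrite ffunE.
rewrite (@sum_comp_helper _ _ (fun g => FIcomp g f == u) (fun g0 g => FIcomp h g0 == g)
           a (fun g0 => FIcomp h g0)); last by move=> i j; rewrite eq_sym.
rewrite (@sum_comp_helper _ _ (fun t => FIcomp h t == u) (fun g0 t => FIcomp g0 f == t)
           a (fun g0 => FIcomp g0 f)); last by move=> i j; rewrite eq_sym.
by apply: eq_bigl => g; rewrite FIcompA.
Qed.

Definition rho {X Y : finType} (f : FIhom X Y) : FImorph (MX Y) (MX X) :=
  @FIMorph (MX Y) (MX X) (@rho_map X Y f) (@rho_linear X Y f) (@rho_nat X Y f).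

(* Coinduction  Q V = S^dagger V :  (Q V)_X = Hom(S(M(X)), V)               *)

Definition Qobj (V : preFImod) (X : finType) : Type := FImorph (Spre (MX X)) V.

Definition Qact (V : preFImod) {X Y : finType} (f : FIhom X Y) (phi : Qobj V X) :
  Qobj V Y := FIcompm phi (Smorph (rho f)).

Definition Qmap (V W : preFImod) (alpha : FImorph V W) (X : finType) (phi : Qobj V X) :
  Qobj W X := FIcompm alpha phi.

Section QModule.
Variables (V : FImod) (X : finType).
Implicit Types phi psi : Qobj V X.

Lemma FIact_add {Y Z : finType} (f : FIhom Y Z) (u v : pobj V Y) :
  pact V f (u + v) = pact V f u + pact V f v.
Proof. by rewrite -[u]scale1r FIact_linear !scale1r. Qed.

Lemma FIact0 {Y Z : finType} (f : FIhom Y Z) : pact V f 0 = 0.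
Proof.
have h := FIact_add f 0 0; rewrite addr0 in h.
by apply: (addIr (pact V f 0)); rewrite add0r -h.
Qed.

Lemma FIact_scale {Y Z : finType} (f : FIhom Y Z) (a : k) (u : pobj V Y) :
  pact V f (a *: u) = a *: pact V f u.
Proof. by rewrite -[a *: u]addr0 FIact_linear FIact0 addr0. Qed.

Lemma Qadd_linear phi psi (Z : finType) (a : k) (u v : pobj (Spre (MX X)) Z) :
  phi Z (a *: u + v) + psi Z (a *: u + v) =
  a *: (phi Z u + psi Z u) + (phi Z v + psi Z v).
Proof. by rewrite !mmap_linear scalerDr addrACA. Qed.

Lemma Qadd_nat phi psi {Z W : finType} (f : FIhom Z W) (v : pobj (Spre (MX X)) Z) :
  phi W (pact _ f v) + psi W (pact _ f v) = pact V f (phi Z v + psi Z v).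
Proof. by rewrite !mmap_nat FIact_add. Qed.

Definition Qadd phi psi : Qobj V X :=
  @FIMorph (Spre (MX X)) V (fun Z v => phi Z v + psi Z v) (Qadd_linear phi psi) (@Qadd_nat phi psi).

Lemma Qscale_linear (c : k) phi (Z : finType) (a : k) (u v : pobj (Spre (MX X)) Z) :
  c *: phi Z (a *: u + v) = a *: (c *: phi Z u) + c *: phi Z v.
Proof. by rewrite mmap_linear scalerDr !scalerA mulrC. Qed.

Lemma Qscale_nat (c : k) phi {Z W : finType} (f : FIhom Z W)
  (v : pobj (Spre (MX X)) Z) :
  c *: phi W (pact _ f v) = pact V f (c *: phi Z v).
Proof. by rewrite mmap_nat FIact_scale. Qed.

Definition Qscale (c : k) phi : Qobj V X :=
  @FIMorph (Spre (MX X)) V (fun Z v => c *: phi Z v) (Qscale_linear c phi) (@Qscale_nat c phi).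
End QModule.

(* The functor Q' :  (Q'V)_X = V_X (+) (S_{-1} V)_X,                        *)
(*   (S_{-1} V)_X = (+)_{x in X} V_{X \ {x}}  (a finite direct sum,          *)
(*   represented as a dependent function x |-> component in V_{X\{x}})       *)

Definition Sm1obj (V : preFImod) (X : finType) : Type :=
  forall x : X, pobj V (Xm x).

Definition Q'obj (V : preFImod) (X : finType) : Type :=
  (pobj V X * Sm1obj V X)%type.

(* f_* on S_{-1} V : the summand V_{X\{x}} goes to the summand V_{Y\{f x}}
   via (f|_{X\{x}})_*  *)
Definition Sm1act (V : preFImod) {X Y : finType} (f : FIhom X Y) (w : Sm1obj V X) :
  Sm1obj V Y :=
  fun y => match boolP (y \in codom f) with
           | AltTrue h => pact V (resF f (iinv h) y (introT eqP (f_iinv h)))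
                                (w (iinv h))
           | AltFalse _ => 0
           end.

(* partial f_* : V_X -> (S_{-1} V)_Y,  v |-> sum_{y notin f(X)} (partial_y f)_* v *)
Definition dpartAct (V : preFImod) {X Y : finType} (f : FIhom X Y) (v : pobj V X) :
  Sm1obj V Y :=
  fun y => match boolP (y \in codom f) with
           | AltTrue _ => 0
           | AltFalse h => pact V (dpartF f y h) v
           end.

Definition Q'act (V : preFImod) {X Y : finType} (f : FIhom X Y) (p : Q'obj V X) :
  Q'obj V Y :=
  (pact V f p.1, fun y => dpartAct V f p.1 y + Sm1act V f p.2 y).

Definition Q'map (V W : preFImod) (alpha : FImorph V W) (X : finType) (p : Q'obj V X) :
  Q'obj W X :=
  (alpha X p.1, fun x => alpha (Xm x) (p.2 x)).

Definition Q'add (V : preFImod) (X : finType) (p q : Q'obj V X) : Q'obj V X :=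
  (p.1 + q.1, fun x => p.2 x + q.2 x).

Definition Q'scale (V : preFImod) (X : finType) (c : k) (p : Q'obj V X) : Q'obj V X :=
  (c *: p.1, fun x => c *: p.2 x).

End FIModules.

Arguments pobj {k} p X.
Arguments pact {k} p {X Y} f _.
Arguments FImorph {k} V W.
Arguments mmap {k V W} _ X _.
Arguments Spre {k} V.
Arguments Smorph {k V W} alpha.
Arguments FIcompm {k U V W} beta alpha.
Arguments rho {k X Y} f.
Arguments Qobj {k} V X.
Arguments Qact {k} V {X Y} f phi.
Arguments Qmap {k V W} alpha {X} phi.
Arguments Qadd {k V X} phi psi.
Arguments Qscale {k V X} c phi.
Arguments Sm1obj {k} V X.
Arguments Q'obj {k} V X.
Arguments Sm1act {k} V {X Y} f w _.
Arguments dpartAct {k} V {X Y} f v _.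
Arguments Q'act {k} V {X Y} f p.
Arguments Q'map {k V W} alpha {X} p.
Arguments Q'add {k V X} p q.
Arguments Q'scale {k V X} c p.

(* A homomorphism phi : S(M(X)) -> V is determined by its values phi(g) on the
   basis injections g : X -> Z + {*}, and naturality moves each of them back to
   a universal one: either g misses *, and then g = sigma(g') o iota_X with
   iota_X = FIsome X : X -> X + {*}, or g sends exactly one x to *, and then
   g = sigma(g') o j_x with j_x = FIstar x : X -> (X \ {x}) + {*} collapsing
   x to *.  Hence phi |-> (phi(iota_X), (phi(j_x))_x) identifies (QV)_X with
   V_X (+) (+)_x V_{X\{x}}, and transporting f_* along this identification
   gives exactly the structure maps of Q'V. *)

From mathcomp Require Import all_boot all_algebra.
From Stdlib Require Import FunctionalExtensionality ProofIrrelevance.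
Import GRing.Theory.
Local Open Scope ring_scope.

Lemma boolP_matchT {T : Type} {c : bool} {Ft : c -> T} {Ff : ~~ c -> T} (h : c) :
  match boolP c with AltTrue h => Ft h | AltFalse h => Ff h end = Ft h.
Proof.
by case: {-1 2}_ / boolP => h'; [rewrite (bool_irrelevance h' h) | case/negP: h'].
Qed.

Lemma boolP_matchF {T : Type} {c : bool} {Ft : c -> T} {Ff : ~~ c -> T} (h : ~~ c) :
  match boolP c with AltTrue h => Ft h | AltFalse h => Ff h end = Ff h.
Proof.
by case: {-1 2}_ / boolP => h'; [case/negP: h | rewrite (bool_irrelevance h' h)].
Qed.

Definition unsome {T : eqType} {o : option T} : o != None -> T :=
  match o with
  | Some t => fun _ => t
  | None => fun H => False_rect T (negP H (eqxx None))
  end.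

Lemma unsomeK {T : eqType} {o : option T} (H : o != None) : Some (unsome H) = o.
Proof. by case: o H. Qed.

Section FImorphisms.
Variables (k : comPzRingType) (V W : preFImod k).

Lemma FImorph_ext (alpha beta : FImorph V W) :
  (forall X v, alpha X v = beta X v) -> alpha = beta.
Proof.
case: alpha beta => [a la na] [b lb nb] /= e.
have eab : a = b.
  by apply: functional_extensionality_dep => X; apply: functional_extensionality.
subst b; by rewrite (proof_irrelevance _ la lb) (proof_irrelevance _ na nb).
Qed.

Variables (alpha : FImorph V W) (Z : finType).

Lemma mmapD (u v : pobj V Z) : alpha Z (u + v) = alpha Z u + alpha Z v.
Proof. by rewrite -[u]scale1r mmap_linear !scale1r. Qed.

Lemma mmap0 : alpha Z 0 = 0.
Proof. by apply: (addIr (alpha Z 0)); rewrite -mmapD !add0r. Qed.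

Lemma mmapZ (a : k) (u : pobj V Z) : alpha Z (a *: u) = a *: alpha Z u.
Proof. by rewrite -[a *: u]addr0 mmap_linear mmap0 addr0. Qed.

Lemma mmap_sum (I : finType) (c : I -> k) (F : I -> pobj V Z) :
  alpha Z (\sum_i c i *: F i) = \sum_i c i *: alpha Z (F i).
Proof.
by rewrite (big_morph _ mmapD mmap0); apply: eq_bigr => i _; rewrite mmapZ.
Qed.

End FImorphisms.

Section Delta.
Variable k : comPzRingType.

Definition delta {X Z : finType} (g : FIhom X Z) : MXobj k X Z :=
  [ffun u => (u == g)%:R].

Lemma sum_delta_preimage {X Z X' Z' : finType} (m : FIhom X Z -> FIhom X' Z')
  (g : FIhom X Z) (u : FIhom X' Z') :
  \sum_(g' | m g' == u) delta g g' = delta (m g) u.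
Proof.
rewrite ffunE; case: eqP => [->|ne].
  rewrite (bigD1 g) //= ffunE eqxx big1 ?addr0 // => g' /andP[_ /negbTE ne].
  by rewrite ffunE ne.
rewrite big1 // => g' /eqP mg'; rewrite ffunE; case: eqP => // eg.
by case: ne; rewrite -mg' eg.
Qed.

Lemma MXact_delta {X Y Z : finType} (h : FIhom Y Z) (g : FIhom X Y) :
  MXact k h (delta g) = delta (FIcomp h g).
Proof. by apply/ffunP => u; rewrite ffunE sum_delta_preimage. Qed.

Lemma rho_delta {X Y Z : finType} (f : FIhom X Y) (g : FIhom Y Z) :
  rho_map k f Z (delta g) = delta (FIcomp g f).
Proof. by apply/ffunP => u; rewrite ffunE sum_delta_preimage. Qed.

Lemma MXobj_delta_sum {X Z : finType} (a : MXobj k X Z) :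
  a = \sum_g a g *: delta g.
Proof.
apply/ffunP => u; rewrite sum_ffunE (bigD1 u) //= big1 ?addr0.
  by rewrite !ffunE eqxx [_ *: _]mulr1.
by move=> g ne; rewrite !ffunE eq_sym (negbTE ne) [_ *: _]mulr0.
Qed.

Lemma sum_delta_scale (M : lmodType k) {X Z : finType} (g : FIhom X Z)
  (F : FIhom X Z -> M) : \sum_g' (delta g : MXobj k X Z) g' *: F g' = F g.
Proof.
rewrite (bigD1 g) //= big1 ?addr0; first by rewrite ffunE eqxx scale1r.
by move=> g' ne; rewrite ffunE (negbTE ne) scale0r.
Qed.

Lemma Qobj_delta_sigma (V : preFImod k) {X Z W : finType} (phi : Qobj V X)
  (h : FIhom Z W) (g : FIhom X (option Z)) :
  phi W (delta (FIcomp (FIsigma h) g)) = pact V h (phi Z (delta g)).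
Proof. by rewrite -MXact_delta -mmap_nat. Qed.

End Delta.
Arguments delta {k X Z} g.
Arguments MXobj_delta_sum {k X Z} a.
Arguments sum_delta_scale {k M X Z} g F.

Definition FIsome (X : finType) : FIhom X (option X) := mkFI (@Some_inj _).

Lemma insub_Xm_inj {X : finType} (x : X) :
  injective (fun y => insub y : option (Xm x)).
Proof.
move=> y y'; case: insubP => [z _ <-|/negPn/eqP->];
  by case: insubP => [z' _ <-|/negPn/eqP->] // [->].
Qed.

Definition FIstar {X : finType} (x : X) : FIhom X (option (Xm x)) :=
  mkFI (insub_Xm_inj x).

Lemma FIstar_self {X : finType} (x : X) : FIstar x x = None.
Proof. by rewrite mkFIE insubF // eqxx. Qed.

Lemma FIstar_val {X : finType} (x : X) (z : Xm x) : FIstar x (val z) = Some z.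
Proof. by rewrite mkFIE valK. Qed.

Lemma FIsigmaE {X Y : finType} (f : FIhom X Y) (o : option X) :
  FIsigma f o = omap f o.
Proof. exact: mkFIE. Qed.

Section Factorization.
Variables (X Z : finType) (g : FIhom X (option Z)).

Section Unsome.
Hypothesis g_some : [forall x, g x != None].

Lemma FIunsome_inj : injective (fun x => unsome (forallP g_some x)).
Proof. by move=> x x' e; have := congr1 Some e; rewrite !unsomeK => /FIfun_inj. Qed.

Definition FIunsome : FIhom X Z := mkFI FIunsome_inj.

Lemma FIunsomeE x : Some (FIunsome x) = g x.
Proof. by rewrite mkFIE unsomeK. Qed.

Lemma FIsome_factor : FIcomp (FIsigma FIunsome) (FIsome X) = g.
Proof. by apply: FIhom_ext => x; rewrite FIcompE FIsigmaE mkFIE /= FIunsomeE. Qed.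

End Unsome.

Section Unstar.
Variables (x : X) (g_star : g x == None).

Lemma FIunstar_some (z : Xm x) : g (val z) != None.
Proof. by rewrite -(eqP g_star) (inj_eq (@FIfun_inj _ _ g)); exact: (valP z). Qed.

Lemma FIunstar_inj : injective (fun z => unsome (FIunstar_some z)).
Proof.
by move=> z z' e; have := congr1 Some e; rewrite !unsomeK => /FIfun_inj /val_inj.
Qed.

Definition FIunstar : FIhom (Xm x) Z := mkFI FIunstar_inj.

Lemma FIunstarE z : Some (FIunstar z) = g (val z).
Proof. by rewrite mkFIE unsomeK. Qed.

Lemma FIstar_factor : FIcomp (FIsigma FIunstar) (FIstar x) = g.
Proof.
apply: FIhom_ext => y; rewrite FIcompE FIsigmaE.
have [->|ne] := eqVneq y x; first by rewrite FIstar_self (eqP g_star).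
by rewrite -[y]/(val (Sub y ne : Xm x)) FIstar_val /= FIunstarE.
Qed.

End Unstar.
End Factorization.
Arguments FIunsome {X Z g} g_some.
Arguments FIunsomeE {X Z g} g_some x.
Arguments FIsome_factor {X Z g} g_some.
Arguments FIunstar {X Z g x} g_star.
Arguments FIunstarE {X Z g x} g_star z.
Arguments FIstar_factor {X Z g x} g_star.

Lemma FIsome_comp {X Y : finType} (f : FIhom X Y) :
  FIcomp (FIsome Y) f = FIcomp (FIsigma f) (FIsome X).
Proof. by apply: FIhom_ext => x; rewrite !FIcompE FIsigmaE !mkFIE. Qed.

Lemma FIstar_comp_dpart {X Y : finType} (f : FIhom X Y) {y : Y}
  (h : y \notin codom f) :
  FIcomp (FIstar y) f = FIcomp (FIsigma (dpartF f y h)) (FIsome X).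
Proof.
apply: FIhom_ext => x; rewrite !FIcompE FIsigmaE [FIsome X x]mkFIE /=.
by rewrite -FIstar_val; congr (FIstar y _); rewrite mkFIE.
Qed.

Lemma FIstar_comp_res {X Y : finType} (f : FIhom X Y) {x : X} {y : Y}
  (e : f x == y) :
  FIcomp (FIstar y) f = FIcomp (FIsigma (resF f x y e)) (FIstar x).
Proof.
apply: FIhom_ext => z; rewrite !FIcompE FIsigmaE.
have [->|ne] := eqVneq z x; first by rewrite FIstar_self (eqP e) FIstar_self.
rewrite -[z]/(val (Sub z ne : Xm x)) FIstar_val /= -FIstar_val.
by congr (FIstar y _); rewrite mkFIE.
Qed.

Definition QtoQ' {k : comPzRingType} {V : preFImod k} {X : finType} (phi : Qobj V X) :
  Q'obj V X :=
  (phi X (delta (FIsome X)), fun x => phi (Xm x) (delta (FIstar x))).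

Lemma QtoQ'_act (k : comPzRingType) (V : FImod k) (X Y : finType) (f : FIhom X Y)
  (phi : Qobj V X) : QtoQ' (Qact V f phi) = Q'act V f (QtoQ' phi).
Proof.
rewrite /QtoQ' /Q'act /=; congr pair.
  by rewrite rho_delta FIsome_comp Qobj_delta_sigma.
apply: functional_extensionality_dep => y; rewrite rho_delta /dpartAct /Sm1act.
have /orP[h|h] := orbN (y \in codom f).
  rewrite !(boolP_matchT h) add0r.
  by rewrite (FIstar_comp_res f (introT eqP (f_iinv h))) Qobj_delta_sigma.
by rewrite !(boolP_matchF h) addr0 (FIstar_comp_dpart f h) Qobj_delta_sigma.
Qed.

Section Inverse.
Variables (k : comPzRingType) (V : FImod k) (X : finType) (p : Q'obj V X).

Definition Q'coef_some {Z : finType} (g : FIhom X (option Z)) : pobj V Z :=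
  match boolP [forall x, g x != None] with
  | AltTrue H => pact V (FIunsome H) p.1
  | AltFalse _ => 0
  end.

Definition Q'coef_star {Z : finType} (g : FIhom X (option Z)) (x : X) : pobj V Z :=
  match boolP (g x == None) with
  | AltTrue H => pact V (FIunstar H) (p.2 x)
  | AltFalse _ => 0
  end.

(* The value of the inverse on the basis element g; since g is injective, at
   most one of the summands is nonzero. *)
Definition Q'coef {Z : finType} (g : FIhom X (option Z)) : pobj V Z :=
  Q'coef_some g + \sum_x Q'coef_star g x.

Lemma Q'coef_star_eq0 {Z : finType} {g : FIhom X (option Z)} {x : X} :
  g x != None -> Q'coef_star g x = 0.
Proof. exact: boolP_matchF. Qed.

Lemma Q'coef_unsome {Z : finType} {g : FIhom X (option Z)}
  (H : [forall x, g x != None]) : Q'coef g = pact V (FIunsome H) p.1.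
Proof.
rewrite /Q'coef /Q'coef_some (boolP_matchT H) big1 ?addr0 // => x _.
exact/Q'coef_star_eq0/(forallP H).
Qed.

Lemma Q'coef_unstar {Z : finType} {g : FIhom X (option Z)} {x : X}
  (H : g x == None) : Q'coef g = pact V (FIunstar H) (p.2 x).
Proof.
have Hn : ~~ [forall y, g y != None] by apply/forallPn; exists x; rewrite negbK.
rewrite /Q'coef /Q'coef_some (boolP_matchF Hn) add0r (bigD1 x) //= big1 ?addr0.
  exact: boolP_matchT.
move=> y ne; apply: Q'coef_star_eq0; apply: contra ne => /eqP gy.
by apply/eqP/(FIfun_inj g); rewrite gy (eqP H).
Qed.

Lemma Q'coef_FIsome : Q'coef (FIsome X) = p.1.
Proof.
have H : [forall x, FIsome X x != None] by apply/forallP => x; rewrite mkFIE.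
rewrite (Q'coef_unsome H) -[RHS](FIact_id k V); congr (pact V _ p.1).
by apply: FIhom_ext => x; apply: Some_inj; rewrite FIunsomeE !mkFIE.
Qed.

Lemma Q'coef_FIstar (x : X) : Q'coef (FIstar x) = p.2 x.
Proof.
have H : FIstar x x == None by rewrite FIstar_self.
rewrite (Q'coef_unstar H) -[RHS](FIact_id k V); congr (pact V _ (p.2 x)).
by apply: FIhom_ext => z; apply: Some_inj; rewrite FIunstarE FIstar_val mkFIE.
Qed.

Lemma Q'coef_some_nat {Z W : finType} (h : FIhom Z W) (g : FIhom X (option Z)) :
  Q'coef_some (FIcomp (FIsigma h) g) = pact V h (Q'coef_some g).
Proof.
have sigmagE x : (FIcomp (FIsigma h) g x == None) = (g x == None).
  by rewrite FIcompE FIsigmaE; case: (g x).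
rewrite /Q'coef_some; have /orP[H|H] := orbN [forall x, g x != None].
  have H' : [forall x, FIcomp (FIsigma h) g x != None].
    by apply/forallP => x; rewrite sigmagE (forallP H).
  rewrite (boolP_matchT H) (boolP_matchT H') -FIact_comp; congr (pact V _ p.1).
  apply: FIhom_ext => x; apply: Some_inj.
  by rewrite FIunsomeE !FIcompE -(FIunsomeE H) FIsigmaE.
have H' : ~~ [forall x, FIcomp (FIsigma h) g x != None].
  by apply: contra H => /forallP H; apply/forallP => x; rewrite -sigmagE.
by rewrite (boolP_matchF H) (boolP_matchF H') FIact0.
Qed.

Lemma Q'coef_star_nat {Z W : finType} (h : FIhom Z W) (g : FIhom X (option Z)) x :
  Q'coef_star (FIcomp (FIsigma h) g) x = pact V h (Q'coef_star g x).
Proof.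
have sigmagE : (FIcomp (FIsigma h) g x == None) = (g x == None).
  by rewrite FIcompE FIsigmaE; case: (g x).
rewrite /Q'coef_star; have /orP[H|H] := orbN (g x == None).
  have H' : FIcomp (FIsigma h) g x == None by rewrite sigmagE.
  rewrite (boolP_matchT H) (boolP_matchT H') -FIact_comp; congr (pact V _ (p.2 x)).
  apply: FIhom_ext => z; apply: Some_inj.
  by rewrite FIunstarE !FIcompE -(FIunstarE H) FIsigmaE.
have H' : ~~ (FIcomp (FIsigma h) g x == None) by rewrite sigmagE.
by rewrite (boolP_matchF H) (boolP_matchF H') FIact0.
Qed.

Lemma Q'coef_nat {Z W : finType} (h : FIhom Z W) (g : FIhom X (option Z)) :
  Q'coef (FIcomp (FIsigma h) g) = pact V h (Q'coef g).
Proof.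
rewrite /Q'coef FIact_add Q'coef_some_nat.
rewrite (big_morph _ (FIact_add k V h) (FIact0 k V h)).
by congr (_ + _); apply: eq_bigr => x _; rewrite Q'coef_star_nat.
Qed.

Definition Q'toQ_map (Z : finType) (a : pobj (Spre (MX k X)) Z) : pobj V Z :=
  \sum_g a g *: Q'coef g.

Lemma Q'toQ_map_linear (Z : finType) (c : k) (a b : pobj (Spre (MX k X)) Z) :
  Q'toQ_map Z (c *: a + b) = c *: Q'toQ_map Z a + Q'toQ_map Z b.
Proof.
rewrite /Q'toQ_map scaler_sumr -big_split; apply: eq_bigr => g _.
by rewrite !ffunE scalerDl scalerA.
Qed.

Lemma Q'toQ_map_nat {Z W : finType} (h : FIhom Z W) (a : pobj (Spre (MX k X)) Z) :
  Q'toQ_map W (pact (Spre (MX k X)) h a) = pact V h (Q'toQ_map Z a).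
Proof.
rewrite /Q'toQ_map /= (big_morph _ (FIact_add k V h) (FIact0 k V h)).
under [RHS]eq_bigr => g _ do rewrite FIact_scale -Q'coef_nat.
rewrite [RHS](partition_big (fun g => FIcomp (FIsigma h) g) xpredT) //=.
apply: eq_bigr => u _; rewrite ffunE scaler_suml.
by apply: eq_bigr => g /eqP <-.
Qed.

Definition Q'toQ : Qobj V X :=
  @FIMorph k (Spre (MX k X)) V Q'toQ_map Q'toQ_map_linear (@Q'toQ_map_nat).

End Inverse.
Arguments Q'coef_some {k V X} p {Z} g.
Arguments Q'coef_star {k V X} p {Z} g x.
Arguments Q'coef {k V X} p {Z} g.
Arguments Q'toQ_map {k V X} p Z a.
Arguments Q'toQ {k V X} p.
Arguments Q'coef_unsome {k V X} p {Z g} H.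
Arguments Q'coef_unstar {k V X} p {Z g x} H.


Lemma Q'coef_QtoQ' (k : comPzRingType) (V : FImod k) (X Z : finType) (phi : Qobj V X)
  (g : FIhom X (option Z)) : Q'coef (QtoQ' phi) g = phi Z (delta g).
Proof.
have [H|/forallPn[x /negPn H]] := boolP [forall x, g x != None].
  by rewrite (Q'coef_unsome _ H) -Qobj_delta_sigma FIsome_factor.
by rewrite (Q'coef_unstar _ H) -Qobj_delta_sigma FIstar_factor.
Qed.

Lemma QtoQ'K (k : comPzRingType) (V : FImod k) (X : finType) :
  cancel (@QtoQ' k V X) (@Q'toQ k V X).
Proof.
move=> phi; apply: FImorph_ext => Z a /=.
rewrite /Q'toQ_map {2}(MXobj_delta_sum a) mmap_sum.
by apply: eq_bigr => g _; rewrite Q'coef_QtoQ'.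
Qed.

Lemma Q'toQK (k : comPzRingType) (V : FImod k) (X : finType) :
  cancel (@Q'toQ k V X) QtoQ'.
Proof.
move=> [v w]; rewrite /QtoQ' /= /Q'toQ_map sum_delta_scale Q'coef_FIsome.
congr pair; apply: functional_extensionality_dep => x.
by rewrite sum_delta_scale Q'coef_FIstar.
Qed.

Theorem mainTheorem3 (k : comPzRingType) :
  exists eta : forall (V : FImod k) (X : finType), Qobj V X -> Q'obj V X,
    [/\ (forall (V : FImod k) (X : finType), bijective (eta V X)),
        (forall (V : FImod k) (X : finType) (phi psi : Qobj V X),
           eta V X (Qadd phi psi) = Q'add (eta V X phi) (eta V X psi)),
        (forall (V : FImod k) (X : finType) (c : k) (phi : Qobj V X),
           eta V X (Qscale c phi) = Q'scale c (eta V X phi)),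
        (forall (V : FImod k) (X Y : finType) (f : FIhom X Y) (phi : Qobj V X),
           eta V Y (Qact V f phi) = Q'act V f (eta V X phi)) &
        (forall (V W : FImod k) (alpha : FImorph V W) (X : finType) (phi : Qobj V X),
           eta W X (Qmap alpha phi) = Q'map alpha (eta V X phi))].
Proof.
exists (fun V X => QtoQ'); split => //.
- by move=> V X; exists Q'toQ; [exact: QtoQ'K | exact: Q'toQK].
- exact: QtoQ'_act.
Qed.
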